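(* Let $\mathcal C$ be a class of compact spaces. Then $\mathcal C^{(\perp)}$ coincides with the class of compact spaces $K$ such that every closed subspace of every continuous image of $K$ that belongs to $\mathcal C$ is metrizable.
   Context: For a class $\mathcal C$ of compact spaces, $\mathcal C^{(\perp)}$ is the class of compact spaces $K$ such that every continuous image of any closed subspace of $K$ that belongs to $\mathcal C$ is metrizable. *)

From HB Require Import structures.
From mathcomp Require Import all_boot all_order all_algebra.
From mathcomp Require Import all_classical all_reals topology.
From mathcomp Require Import Rstruct.
Set Implicit Arguments. Unset Strict Implicit. Unset Printing Implicit Defensive.
Import Order.TTheory GRing.Theory Num.Theory.
Local Open Scope classical_set_scope.
Local Open Scope ring_scope.

(* Compact spaces are compact Hausdorff spaces (convention of the paper). *)
Definition compact_space (T : topologicalType) : Prop :=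
  compact [set: T] /\ hausdorff_space T.

Definition metrizable (T : topologicalType) : Prop :=
  exists d : T -> T -> Rdefinitions.R,
    [/\ (forall x y, d x y = 0 <-> x = y),
        (forall x y, d x y = d y x),
        (forall x y z, d x z <= d x y + d y z) &
        (forall A : set T,
           open A <-> forall x, A x -> exists2 e, 0 < e & [set y | d x y < e] `<=` A)].

Definition homeomorphic (S T : topologicalType) : Prop :=
  exists (f : S -> T) (g : T -> S),
    [/\ continuous f, continuous g, cancel f g & cancel g f].

Definition class_of_compacta (C : topologicalType -> Prop) : Prop :=
  (forall T, C T -> compact_space T) /\
  (forall S T, homeomorphic S T -> C S -> C T).

(* L is a continuous image of the space S (L Hausdorff, i.e. a compact space). *)
Definition cont_image (S L : topologicalType) : Prop :=
  hausdorff_space L /\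
  exists f : S -> L, continuous f /\ (forall y, exists x, f x = y).

Definition perp_class (C : topologicalType -> Prop) (K : topologicalType) : Prop :=
  compact_space K /\
  forall F : set K, closed F ->
    forall L : topologicalType, cont_image (set_type F) L -> C L -> metrizable L.

Definition perp_class' (C : topologicalType -> Prop) (K : topologicalType) : Prop :=
  compact_space K /\
  forall L : topologicalType, cont_image K L ->
    forall F : set L, closed F -> C (set_type F) -> metrizable (set_type F).

(* One inclusion restricts a continuous surjection f : K -> L to
   f^-1(F) -> F for a closed F of L.  For the other, given a closed F of K and
   a continuous surjection g : F -> L onto some L in C, glue K to L along g.
   The adjunction space K ∪_g L is a continuous image of K containing a closed
   copy of L, onto which L maps by a continuous bijection, a homeomorphism
   since L is compact.  It is Hausdorff because its quotient map is closed
   (g is a closed map, F being compact and L Hausdorff) and K is normal, so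
   disjoint fibres have disjoint saturated open neighbourhoods. *)

From HB Require Import structures.
From mathcomp Require Import all_boot all_classical all_reals topology.
Set Implicit Arguments.
Unset Strict Implicit.
Unset Printing Implicit Defensive.
Local Open Scope classical_set_scope.

Section set_type_topology.
Context {T : topologicalType} (F : set T).

Lemma set_type_openP (U : set F) :
  open U <-> exists2 O : set T, open O & U = set_val @^-1` O.
Proof. by split=> -[O oO UO]; exists O. Qed.

Lemma set_type_closedP (U : set F) :
  closed U <-> exists2 D : set T, closed D & U = set_val @^-1` D.
Proof.
rewrite -openC set_type_openP; split=> -[O oO UO].
  by exists (~` O); [rewrite closedC | rewrite -[U]setCK UO].
by exists (~` O); [rewrite openC | rewrite UO].
Qed.

Lemma set_val_continuous : continuous (set_val : F -> T).
Proof. exact: initial_continuous. Qed.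

Lemma open_set_val_preimage (O : set T) :
  open O -> open (set_val @^-1` O : set F).
Proof. by move=> oO; apply/set_type_openP; exists O. Qed.

Lemma set_type_hausdorff : hausdorff_space T -> hausdorff_space F.
Proof.
rewrite !open_hausdorff => hT x y xy.
have /hT[[A B] /= [xA yB] [oA oB /eqP AB0]] : set_val x != set_val y.
  by apply: contra xy => /eqP/val_inj ->.
exists (set_val @^-1` A, set_val @^-1` B).
  by move: xA yB; rewrite !in_setE.
split; [exact: open_set_val_preimage | exact: open_set_val_preimage |].
by rewrite -preimage_setI AB0 preimage_set0.
Qed.

Lemma compact_set_type : compact F -> compact [set: F].
Proof.
move=> cF; have [F0|/set0P[x0 Fx0]] := eqVneq F set0.
  suff -> : [set: F] = set0 by exact: compact0.
  by apply/seteqP; split=> // -[y Fy] _; exfalso; move/set_mem: Fy; rewrite F0.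
pose r : T -> F := insubd (exist _ x0 (mem_set Fx0)).
have rK : cancel set_val r by move=> x; exact: valKd.
have rF : r @` F = [set: F].
  apply/seteqP; split=> // x _.
  by exists (set_val x); [exact: set_valP | exact: rK].
rewrite -rF; apply: continuous_compact cF.
apply/subspace_sigL_continuousP.
have -> : sigL F r = id by apply/funext => x; exact: rK.
by move=> x; exact: cvg_id.
Qed.

Lemma closed_set_val_image (B : set F) :
  closed F -> closed B -> closed (set_val @` B).
Proof.
move=> cF /set_type_closedP[D cD ->].
suff -> : set_val @` (@set_val T F @^-1` D) = F `&` D by exact: closedI.
rewrite eqEsubset; split=> [_ [x Dx <-]|x [Fx Dx]].
  by split=> //; exact: set_valP.
by exists (exist _ x (mem_set Fx)).
Qed.
End set_type_topology.

Lemma homeomorphic_metrizable (S T : topologicalType) :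
  homeomorphic S T -> metrizable T -> metrizable S.
Proof.
case=> f [g [cf cg fK gK]] [d [d0 dC dtri dopen]].
exists (fun x y => d (f x) (f y)).
split=> [x y|x y|x y z|A]; [|exact: dC|exact: dtri|].
  by rewrite d0; split=> [/(can_inj fK)|->].
split=> [oA x Ax|dA].
  have /dopen/(_ (f x)) : open (g @^-1` A) by exact: (continuousP _).1 cg _ oA.
  rewrite /= fK => /(_ Ax)[e e0 sub]; exists e => // y /sub.
  by rewrite /= fK.
have -> : A = f @^-1` (g @^-1` A) by apply/funext => x; rewrite /= fK.
apply: (continuousP _).1 cf _ _; apply/dopen => y /= Ay.
have [e e0 sub] := dA _ Ay; exists e => // z dz.
by apply: sub; rewrite /= !gK.
Qed.

Lemma closed_continuous_image {S T : topologicalType} (f : S -> T) (B : set S) :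
  compact [set: S] -> hausdorff_space T -> continuous f -> closed B ->
  closed (f @` B).
Proof.
move=> cS hT cf cB; apply: compact_closed hT _.
exact: continuous_compact (continuous_subspaceT cf) (subclosed_compact cB cS _).
Qed.

Lemma compact_hausdorff_homeomorphic {S T : topologicalType} (f : S -> T) :
  compact [set: S] -> hausdorff_space T -> continuous f -> injective f ->
  (forall y, exists x, f x = y) -> homeomorphic S T.
Proof.
move=> cS hT cf finj fsurj.
pose g y := projT1 (cid (fsurj y)).
have gK : cancel g f := fun y => projT2 (cid (fsurj y)).
have fK : cancel f g := fun x => finj _ _ (gK (f x)).
exists f, g; split=> //; apply/continuous_closedP => B cB.
have -> : g @^-1` B = f @` B.
  rewrite eqEsubset; split=> [y By|_ [x Bx <-]]; first by exists (g y).
  by rewrite /= fK.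
exact: closed_continuous_image.
Qed.

Lemma compact_separate_closed (T : topologicalType) (A B : set T) :
  hausdorff_space T -> compact [set: T] -> closed A -> closed B ->
  A `&` B = set0 ->
  exists U V : set T, [/\ open U, open V, A `<=` U, B `<=` V & U `&` V = set0].
Proof.
move=> hT cT cA cB AB0.
have nbhsA : set_nbhs A (~` B).
  apply/set_nbhsP; exists (~` B); split=> //; first exact: closed_openC.
  by move=> x Ax Bx; have : (A `&` B) x by []; rewrite AB0.
have [W /set_nbhsP[U [oU AU UW]] clW] := compact_normal hT cT cA nbhsA.
exists U, (~` closure W); split=> //.
- exact/closed_openC/closed_closure.
- by move=> x Bx /clW.
- by rewrite -subset0 => x [/UW/subset_closure].
Qed.

(* [g] does not occur in the carrier, but the quotient topology given to it
   below depends on [g]. *)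
Definition adjunction_space {T L : topologicalType} {F : set T} (g : F -> L) :
  Type := (L + set_type (~` F))%type.

Section adjunction_space.
Context {T L : topologicalType} (F : set T) (g : F -> L).
Local Notation X := (adjunction_space g).

HB.instance Definition _ := Choice.on X.

Definition adjunction_proj (x : T) : X :=
  match pselect (F x) with
  | left Fx => inl (g (exist _ x (mem_set Fx)))
  | right nFx => inr (exist _ x (mem_set nFx))
  end.

Definition adjunction_open (U : set X) := open (adjunction_proj @^-1` U).

Program Definition adjunction_topology_mixin :=
  @isOpenTopological.Build X adjunction_open _ _ _.
Next Obligation. by rewrite /adjunction_open preimage_setT; exact: openT. Qed.
Next Obligation. by move=> ? ? ? ?; exact: openI. Qed.
Next Obligation. by move=> I f ofi; apply: bigcup_open => i _; exact: ofi. Qed.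
HB.instance Definition _ := adjunction_topology_mixin.

Lemma adjunction_proj_continuous : continuous adjunction_proj.
Proof. exact/continuousP. Qed.

Lemma adjunction_closedE (U : set X) :
  closed U <-> closed (adjunction_proj @^-1` U).
Proof. by rewrite -openC -[X in _ <-> X]openC. Qed.

Variant adjunction_proj_spec (x : T) : X -> Prop :=
  | AdjunctionProjIn (a : F) of set_val a = x :
      adjunction_proj_spec x (inl (g a))
  | AdjunctionProjOut (nFx : ~ F x) :
      adjunction_proj_spec x (inr (exist _ x (mem_set nFx))).

Lemma adjunction_projP (x : T) : adjunction_proj_spec x (adjunction_proj x).
Proof. by rewrite /adjunction_proj; case: pselect => Fx; constructor. Qed.

Lemma adjunction_proj_val (a : F) : adjunction_proj (set_val a) = inl (g a).
Proof.
by case: adjunction_projP => [b /val_inj -> //|nFa]; case: (nFa (set_valP a)).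
Qed.

Lemma adjunction_proj_preimage_image (A : set T) :
  adjunction_proj @^-1` (adjunction_proj @` A) =
  A `|` set_val @` (g @^-1` (g @` (set_val @^-1` A))).
Proof.
rewrite eqEsubset; split=> [x [y Ay]|x [Ax|[a [b Ab gab] <-]]].
- move: Ay; case: adjunction_projP => [b <-|nFy] Ay;
    case: adjunction_projP => [a <-|nFx] //.
    by case=> gab; right; exists a => //; exists b.
  by case=> <-; left.
- by exists x.
- by exists (set_val b) => //; rewrite !adjunction_proj_val gab.
Qed.

Definition adjunction_base : set X := range inl.

Lemma adjunction_base_closed : closed F -> closed adjunction_base.
Proof.
move=> cF; apply/adjunction_closedE.
suff -> : adjunction_proj @^-1` adjunction_base = F by [].
rewrite eqEsubset; split=> [x /=|x Fx].
- by case: adjunction_projP => [a <- _|nFx [] //]; exact: set_valP.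
- rewrite /preimage/= -[x]/(set_val (exist _ x (mem_set Fx))).
  by rewrite adjunction_proj_val; exact: imageT.
Qed.

Hypotheses (hT : hausdorff_space T) (cT : compact [set: T]) (cF : closed F).
Hypotheses (hL : hausdorff_space L) (cg : continuous g).
Hypothesis gsurj : forall y, exists a, g a = y.

Let compact_F : compact [set: F].
Proof. exact: compact_set_type (subclosed_compact cF cT (subsetT F)). Qed.

Lemma adjunction_proj_surj (m : X) : exists x, adjunction_proj x = m.
Proof.
case: m => [y|[x nFx]].
  by have [a <-] := gsurj y; exists (set_val a); exact: adjunction_proj_val.
exists x; case: adjunction_projP => [a ax|nFx'].
  by move: nFx; rewrite -ax => /set_mem[]; exact: set_valP.
by congr inr; exact: val_inj.
Qed.

Lemma closed_adjunction_proj_image (A : set T) :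
  closed A -> closed (adjunction_proj @` A).
Proof.
move=> cA; apply/adjunction_closedE; rewrite adjunction_proj_preimage_image.
apply: (closedU cA (closed_set_val_image cF _)).
apply: preimage_closed => [a _|]; first exact: cg.
apply: closed_continuous_image compact_F hL cg _.
by apply: preimage_closed cA => a _; exact: set_val_continuous.
Qed.

Lemma adjunction_hausdorff : hausdorff_space X.
Proof.
have fiber_closed m : closed (adjunction_proj @^-1` [set m]).
  have [x <-] := adjunction_proj_surj m; rewrite -image_set1.
  apply/adjunction_closedE/closed_adjunction_proj_image.
  exact/accessible_closed_set1/hausdorff_accessible.
rewrite open_hausdorff => m1 m2 m12.
have [|U [V [oU oV U1 V2 UV0]]] :=
  compact_separate_closed hT cT (fiber_closed m1) (fiber_closed m2).
  by rewrite -subset0 => x [/= -> e]; rewrite e eqxx in m12.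
pose fibers_in (W : set T) := ~` (adjunction_proj @` ~` W).
have fibers_in_open W : open W -> open (fibers_in W).
  by move=> oW; exact/closed_openC/closed_adjunction_proj_image/open_closedC.
exists (fibers_in U, fibers_in V).
  by split; rewrite in_setE => -[x + e]; apply; [apply: U1|apply: V2].
split; [exact: fibers_in_open|exact: fibers_in_open|].
apply/eqP; rewrite -subset0 => m [Um Vm].
have [x xm] := adjunction_proj_surj m.
have : (U `&` V) x.
  by split; apply: contrapT => nW; [apply: Um|apply: Vm]; exists x.
by rewrite UV0.
Qed.

Lemma cont_image_adjunction : cont_image T X.
Proof.
split; first exact: adjunction_hausdorff.
exists adjunction_proj; split; first exact: adjunction_proj_continuous.
exact: adjunction_proj_surj.
Qed.

Lemma inl_adjunction_continuous : continuous (inl : L -> X).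
Proof.
apply/continuous_closedP => B cB.
have -> : inl @^-1` B = g @` (set_val @^-1` (adjunction_proj @^-1` B)).
  rewrite eqEsubset; split=> [y By|_ [a Ba <-]].
    have [a gay] := gsurj y; exists a => //.
    by rewrite /= adjunction_proj_val gay.
  by rewrite /= -adjunction_proj_val.
apply: closed_continuous_image compact_F hL cg _.
apply: preimage_closed => [a _|]; first exact: set_val_continuous.
by apply/adjunction_closedE.
Qed.

Lemma homeomorphic_adjunction_base : homeomorphic L (set_type adjunction_base).
Proof.
pose to_base (y : L) : set_type adjunction_base :=
  exist _ (inl y) (mem_set (imageT inl y)).
apply: (@compact_hausdorff_homeomorphic _ _ to_base).
- have -> : [set: L] = g @` [set: F].
    by rewrite eqEsubset; split=> // y _; have [a <-] := gsurj y; exact: imageT.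
  exact: continuous_compact (continuous_subspaceT cg) compact_F.
- exact/set_type_hausdorff/adjunction_hausdorff.
- exact/continuous_comp_initial/inl_adjunction_continuous.
- by move=> y y' /(congr1 set_val) [].
- by case=> m bm; have [y _ ym] := set_mem bm; exists y; exact: val_inj.
Qed.
End adjunction_space.

Lemma cont_image_preimage {S L : topologicalType} (f : S -> L) (B : set L) :
  hausdorff_space L -> continuous f -> (forall y, exists x, f x = y) ->
  cont_image (set_type (f @^-1` B)) (set_type B).
Proof.
move=> hL cf fsurj; split; first exact: set_type_hausdorff.
pose fB (x : set_type (f @^-1` B)) : set_type B :=
  exist _ (f (set_val x)) (mem_set (set_valP x)).
exists fB; split.
  apply: continuous_comp_initial.
  rewrite (_ : set_val \o fB = f \o set_val) //.
  by move=> x; apply: continuous_comp; [exact: set_val_continuous | exact: cf].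
move=> [y By]; have [x fxy] := fsurj y.
have Bfx : (f @^-1` B) x by rewrite /= fxy; exact/set_mem.
by exists (exist _ x (mem_set Bfx)); apply: val_inj.
Qed.

Lemma perp_class_perp_class' (C : topologicalType -> Prop)
    (K : topologicalType) :
  perp_class C K -> perp_class' C K.
Proof.
case=> cK perpK; split=> // L [hL [f [cf fsurj]]] B cB.
apply: perpK (cont_image_preimage B hL cf fsurj).
by apply: preimage_closed cB => x _; exact: cf.
Qed.

Lemma perp_class'_perp_class (C : topologicalType -> Prop)
    (K : topologicalType) :
  class_of_compacta C -> perp_class' C K -> perp_class C K.
Proof.
move=> [_ homC] [[cK hK] perpK]; split=> // F cF L [hL [g [cg gsurj]]] CL.
have homL := homeomorphic_adjunction_base hK cK cF hL cg gsurj.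
apply: (homeomorphic_metrizable homL).
apply: (perpK _ (cont_image_adjunction hK cK cF hL cg gsurj)).
  exact: adjunction_base_closed.
exact: homC homL CL.
Qed.

Theorem lemma2p3 (C : topologicalType -> Prop) :
  class_of_compacta C ->
  forall K : topologicalType, perp_class C K <-> perp_class' C K.
Proof.
move=> classC K; split; first exact: perp_class_perp_class'.
exact: perp_class'_perp_class.
Qed.
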